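(* Let $U$ be in class $\mathcal{K}^{+}$ on $[y_1,y_2]$ and $\beta\in(\min U'',\max U'')$. If $\alpha>0$ and $\phi$ is a solution of $-\phi''+\alpha^2\phi-\frac{\beta-U''}{U-c}\phi=0$ on $(y_1,y_2)$, $\phi(y_1)=\phi(y_2)=0$, with $c=c_r+ic_i$, $c_i>0$, then $$\int_{y_1}^{y_2}(|\phi'|^2+\alpha^2|\phi|^2)\,dy\le\int_{y_1}^{y_2}K_\beta|\phi|^2\,dy,$$ $$\int_{y_1}^{y_2}(|\phi''|^2+2\alpha^2|\phi'|^2+\alpha^4|\phi|^2)\,dy\le\|K_\beta\|_{L^\infty}\int_{y_1}^{y_2}K_\beta|\phi|^2\,dy.$$
   Context: Class $\mathcal{K}^+$: $U\in C^{3}([y_1,y_2])$ is not constant, and for each $\beta\in\mathrm{Ran}(U'')$ there exists $U_\beta\in\mathrm{Ran}(U)$ such that $K_\beta(y)=\frac{\beta-U''(y)}{U(y)-U_\beta}$ is positive and bounded on $[y_1,y_2]$. *)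

From Stdlib Require Import Reals.
From Coquelicot Require Import Coquelicot.
Open Scope R_scope.

(* U is C^3 on [y1,y2]: we ask for (two-sided) derivatives up to order 3
   on an open neighbourhood of [y1,y2], with continuous third derivative. *)
Definition C3_on (U : R -> R) (y1 y2 : R) : Prop :=
  exists eps : R, 0 < eps /\
    forall x : R, y1 - eps < x < y2 + eps ->
      (forall k : nat, (k <= 3)%nat -> ex_derive_n U k x) /\
      continuous (Derive_n U 3) x.

Definition Ran (f : R -> R) (y1 y2 : R) (v : R) : Prop :=
  exists y : R, y1 <= y <= y2 /\ f y = v.

(* K_beta(y) = (beta - U''(y)) / (U(y) - U_beta)  (literal quotient;
   Rocq's convention x / 0 = 0 only matters on the zero set of U - U_beta). *)
Definition Kbeta (U : R -> R) (beta Ub : R) (y : R) : R :=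
  (beta - Derive_n U 2 y) / (U y - Ub).

(* "K_beta is positive and bounded on [y1,y2]": the quotient
   (beta - U'')/(U - U_beta) defines (after filling in the 0/0 points)
   a function K on [y1,y2] which is positive and bounded. *)
Definition Kbeta_pos_bdd (U : R -> R) (y1 y2 beta Ub : R) : Prop :=
  exists (K : R -> R) (M : R),
    forall y : R, y1 <= y <= y2 ->
      K y * (U y - Ub) = beta - Derive_n U 2 y /\ 0 < K y /\ K y <= M.

Definition classKplus (U : R -> R) (y1 y2 : R) : Prop :=
  C3_on U y1 y2 /\
  (exists x y : R, y1 <= x <= y2 /\ y1 <= y <= y2 /\ U x <> U y) /\
  (forall beta : R, Ran (Derive_n U 2) y1 y2 beta ->
     exists Ub : R, Ran U y1 y2 Ub /\ Kbeta_pos_bdd U y1 y2 beta Ub).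

Definition Linf_on (f : R -> R) (y1 y2 : R) : R :=
  real (Lub_Rbar (fun v : R => exists y : R, y1 <= y <= y2 /\ v = Rabs (f y))).

From Stdlib Require Import Reals Lra Psatz Classical.
From Coquelicot Require Import Coquelicot.
Open Scope R_scope.

(* Multiplying the equation by the conjugate of phi and integrating by parts, the real
   and imaginary parts give, with w = (beta - U'')/|U - c|^2 = K_beta (U - U_beta)/|U - c|^2,
     int (|phi'|^2 + alpha^2 |phi|^2) = int w (U - c_r) |phi|^2   and   int w |phi|^2 = 0.
   Adding (U_beta - c_r) times the second identity to the first turns the weight into
   w (U - 2 c_r + U_beta) = K_beta - K_beta ((c_r - U_beta)^2 + c_i^2)/|U - c|^2 <= K_beta.
   For the second estimate, the left-hand side is int |phi'' - alpha^2 phi|^2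
   = int w^2 |U - c|^2 |phi|^2 = int K_beta w (U - U_beta) |phi|^2, at most
   ||K_beta||_oo int w (U - U_beta) |phi|^2, and by the second identity this last integral
   is the right-hand side of the first one.
   Since phi' and phi'' are only given on the open interval, the equation, whose right-hand
   side is continuous up to the boundary, first provides a C^2 representative of phi on R.
   Riemann integrability of K_beta |phi|^2 (K_beta is 0 where U = U_beta) holds because each
   zero of U - U_beta is isolated or, when U' = beta = 0 there, lies inside an interval on
   which U = U_beta, by uniqueness for U'' = - K_beta (U - U_beta). *)

Lemma continuous_Rplus (f g : R -> R) x :
  continuous f x -> continuous g x -> continuous (fun y => f y + g y) x.
Proof.
  intros Hf Hg. apply continuity_pt_filterlim, continuity_pt_plus;
    now apply continuity_pt_filterlim.
Qed.

Lemma continuous_Rminus (f g : R -> R) x :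
  continuous f x -> continuous g x -> continuous (fun y => f y - g y) x.
Proof.
  intros Hf Hg. apply continuity_pt_filterlim, continuity_pt_minus;
    now apply continuity_pt_filterlim.
Qed.

Lemma continuous_Rmult (f g : R -> R) x :
  continuous f x -> continuous g x -> continuous (fun y => f y * g y) x.
Proof.
  intros Hf Hg. apply continuity_pt_filterlim, continuity_pt_mult;
    now apply continuity_pt_filterlim.
Qed.

Lemma continuous_Rdiv (f g : R -> R) x :
  continuous f x -> continuous g x -> g x <> 0 -> continuous (fun y => f y / g y) x.
Proof.
  intros Hf Hg Hg0. apply continuity_pt_filterlim, continuity_pt_div; trivial;
    now apply continuity_pt_filterlim.
Qed.

Lemma continuous_Rpow (f : R -> R) n x :
  continuous f x -> continuous (fun y => f y ^ n) x.
Proof.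
  intros Hf. induction n as [|n IH]; simpl.
  - apply continuous_const.
  - now apply continuous_Rmult.
Qed.

Ltac continuity_R :=
  repeat
    match goal with
    | |- continuous (fun y => @?f y + @?g y) _ => apply (continuous_Rplus f g)
    | |- continuous (fun y => @?f y - @?g y) _ => apply (continuous_Rminus f g)
    | |- continuous (fun y => @?f y * @?g y) _ => apply (continuous_Rmult f g)
    | |- continuous (fun y => @?f y ^ ?n) _ => apply (continuous_Rpow f n)
    | |- continuous (fun _ => _) _ => apply continuous_const
    | |- continuous (fun y => y) _ => apply continuous_id
    | |- continuous _ _ => assumption
    | H : forall x, continuous ?f x |- continuous ?f _ => apply H
    end.

Lemma is_derive_continuous (f : R -> R) x l : is_derive f x l -> continuous f x.
Proof. intros H. apply (ex_derive_continuous f x). now exists l. Qed.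

Lemma is_derive_continuity_pt (f : R -> R) x l : is_derive f x l -> continuity_pt f x.
Proof. intros H. now apply continuity_pt_filterlim, (is_derive_continuous f x l). Qed.

Lemma continuous_ball (f : R -> R) x eps :
  continuous f x -> 0 < eps ->
  exists del, 0 < del /\ forall z, Rabs (z - x) < del -> Rabs (f z - f x) < eps.
Proof.
  intros Hf Heps.
  destruct (proj1 (continuity_pt_locally f x) (proj2 (continuity_pt_filterlim f x) Hf)
              (mkposreal eps Heps)) as [del Hdel].
  exists del. split; [apply cond_pos | intros z Hz; exact (Hdel z Hz)].
Qed.

(* The final [change] retypes the equation from [R_AbsRing] to [R] for [ring] and [field]. *)
Ltac auto_derive_using :=
  auto_derive;
  [ repeat split; eexists; eassumption
  | repeat match goal with
      H : is_derive ?f ?z ?l |- _ => rewrite (is_derive_unique (fun t : R => f t) z l H)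
    end;
    match goal with |- ?A = ?B => change (@eq R A B) end ].

Definition clamp (a b y : R) : R := Rmax a (Rmin b y).

Lemma clamp_in a b y : a <= b -> a <= clamp a b y <= b.
Proof. intros. unfold clamp, Rmax, Rmin. repeat destruct Rle_dec; lra. Qed.

Lemma clamp_id a b y : a <= y <= b -> clamp a b y = y.
Proof. intros. unfold clamp, Rmax, Rmin. repeat destruct Rle_dec; lra. Qed.

Lemma clamp_contraction a b y z :
  a <= b -> Rabs (clamp a b z - clamp a b y) <= Rabs (z - y).
Proof.
  intros. unfold clamp, Rmax, Rmin.
  repeat destruct Rle_dec; unfold Rabs; repeat destruct Rcase_abs; lra.
Qed.

Lemma continuous_clamp_comp {V : UniformSpace} (g : R -> V) a b x :
  a <= b ->
  (forall y, a <= y <= b ->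
     filterlim g (within (fun z => a <= z <= b) (locally y)) (locally (g y))) ->
  continuous (fun z => g (clamp a b z)) x.
Proof.
  intros Hab Hg.
  apply (filterlim_comp _ _ _ (clamp a b) g (locally x)
           (within (fun z => a <= z <= b) (locally (clamp a b x)))).
  - intros P [eps HP]. exists eps. intros z Hz. apply HP; [|apply clamp_in; lra].
    eapply Rle_lt_trans; [apply clamp_contraction; lra | exact Hz].
  - apply Hg, clamp_in, Hab.
Qed.

Lemma filterlim_within_of_continuous {V : UniformSpace} (g : R -> V) D y :
  continuous g y -> filterlim g (within D (locally y)) (locally (g y)).
Proof. intros Hg. exact (filterlim_filter_le_1 g (filter_le_within D) Hg). Qed.

Lemma Rabs_between x y z : Rmin x y <= z <= Rmax x y -> Rabs (z - x) <= Rabs (y - x).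
Proof. unfold Rmin, Rmax; destruct Rle_dec; unfold Rabs; repeat destruct Rcase_abs; lra. Qed.

Lemma taylor_second_order_bound (f f1 f2 : R -> R) (x y c K : R) :
  (forall z, Rmin x y <= z <= Rmax x y -> is_derive f z (f1 z) /\ is_derive f1 z (f2 z)) ->
  (forall z, Rmin x y <= z <= Rmax x y -> Rabs (f2 z - c) <= K) ->
  Rabs (f y - f x - f1 x * (y - x) - c / 2 * (y - x) ^ 2) <= K * (y - x) ^ 2.
Proof.
  intros Hd HK.
  destruct (MVT_gen (fun z => f z - f1 x * z - c / 2 * (z - x) ^ 2) x y
              (fun z => f1 z - f1 x - c * (z - x))) as [t [Ht Et]].
  { intros z Hz. destruct (Hd z ltac:(lra)) as [D _]. auto_derive_using. field. }
  { intros z Hz. destruct (Hd z Hz) as [D _].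
    apply (is_derive_continuity_pt _ _ (f1 z - f1 x - c * (z - x))).
    auto_derive_using. field. }
  assert (Hsub : forall z, Rmin x t <= z <= Rmax x t -> Rmin x y <= z <= Rmax x y)
    by (intros z; revert Ht; unfold Rmin, Rmax; repeat destruct Rle_dec; lra).
  destruct (MVT_gen (fun z => f1 z - c * z) x t (fun z => f2 z - c)) as [d [Hdd Ed]].
  { intros z Hz. destruct (Hd z ltac:(apply Hsub; lra)) as [_ D]. auto_derive_using. ring. }
  { intros z Hz. destruct (Hd z ltac:(apply Hsub; lra)) as [_ D].
    apply (is_derive_continuity_pt _ _ (f2 z - c)).
    auto_derive_using. ring. }
  replace (f y - f x - f1 x * (y - x) - c / 2 * (y - x) ^ 2)
    with ((f2 d - c) * (t - x) * (y - x)) by (simpl in Et, Ed; nra).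
  rewrite !Rabs_mult.
  assert (Htx := Rabs_between x y t Ht).
  replace ((y - x) ^ 2) with (Rabs (y - x) * Rabs (y - x))
    by (unfold Rabs; destruct Rcase_abs; ring).
  rewrite Rmult_assoc.
  apply Rmult_le_compat; auto using Rabs_pos, Rmult_le_pos.
  apply Rmult_le_compat_r; auto using Rabs_pos.
Qed.

Lemma is_derive_0_const (g : R -> R) a b s t :
  (forall z, a < z < b -> is_derive g z 0) -> a < s < b -> a < t < b -> g t = g s.
Proof.
  intros Hd Hs Ht.
  assert (Hin : forall z, Rmin s t <= z <= Rmax s t -> a < z < b)
    by (intros z; unfold Rmin, Rmax; destruct Rle_dec; lra).
  destruct (MVT_gen g s t (fun _ => 0)) as [c [_ Hc]].
  - intros z Hz. apply Hd, Hin. lra.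
  - intros z Hz. apply (is_derive_continuity_pt _ _ 0), Hd, Hin, Hz.
  - lra.
Qed.

Lemma is_derive_primitive (F : R -> R) (k m : R) :
  (forall x, continuous F x) -> forall x, is_derive (fun t => k + RInt F m t) x (F x).
Proof.
  intros HF x. auto_derive.
  - repeat split.
    + apply (ex_RInt_continuous F). intros; apply HF.
    + apply filter_forall. intros t. apply continuity_pt_filterlim, HF.
  - ring.
Qed.

Lemma C2_extension (a b : R) (f f1 f2 F : R -> R) :
  a < b -> (forall x, continuous F x) ->
  (forall x, a < x < b -> is_derive f x (f1 x) /\ is_derive f1 x (f2 x) /\ f2 x = F x) ->
  exists g g1 : R -> R,
    (forall x, is_derive g x (g1 x) /\ is_derive g1 x (F x)) /\
    (forall x, a < x < b -> g x = f x /\ g1 x = f1 x).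
Proof.
  intros Hab HF Hf.
  set (m := (a + b) / 2). assert (Hm : a < m < b) by (unfold m; lra).
  set (g1 := fun t => f1 m + RInt F m t).
  assert (Hg1 : forall x, is_derive g1 x (F x)) by apply is_derive_primitive, HF.
  set (g := fun t => f m + RInt g1 m t).
  assert (Hg : forall x, is_derive g x (g1 x))
    by (apply is_derive_primitive; intros x; exact (is_derive_continuous _ _ _ (Hg1 x))).
  assert (Hg1m : g1 m = f1 m) by (unfold g1; rewrite RInt_point; unfold zero; simpl; ring).
  assert (Hgm : g m = f m) by (unfold g; rewrite RInt_point; unfold zero; simpl; ring).
  assert (E1 : forall x, a < x < b -> g1 x = f1 x).
  { intros x Hx. enough (g1 x - f1 x = g1 m - f1 m) by lra.
    apply (is_derive_0_const (fun t => g1 t - f1 t) a b); [| exact Hm | exact Hx].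
    intros z Hz. destruct (Hf z Hz) as (_ & D & E). rewrite E in D. pose proof (Hg1 z).
    auto_derive_using. ring. }
  exists g, g1. split; [intros x; split; auto |].
  intros x Hx. split; [| exact (E1 x Hx)].
  enough (g x - f x = g m - f m) by lra.
  apply (is_derive_0_const (fun t => g t - f t) a b); [| exact Hm | exact Hx].
  intros z Hz. destruct (Hf z Hz) as (D & _). rewrite <- (E1 z Hz) in D. pose proof (Hg z).
  auto_derive_using. ring.
Qed.

Lemma within_open_interval_proper a b t :
  a < b -> a <= t <= b -> ProperFilter' (within (fun z => a < z < b) (locally t)).
Proof.
  intros Hab Ht. constructor; [| apply within_filter, locally_filter].
  intros [eps He]. pose proof (cond_pos eps) as Heps. simpl in He.
  set (s := eps / (eps + (b - a))).
  assert (Hs : 0 < s < 1 /\ s * (b - a) < eps).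
  { assert (E : s * (eps + (b - a)) = eps) by (unfold s; field; lra).
    split; [split |]; nra. }
  apply (He ((1 - s) * t + s * ((a + b) / 2))); [| nra].
  change (Rabs ((1 - s) * t + s * ((a + b) / 2) - t) < eps).
  replace ((1 - s) * t + s * ((a + b) / 2) - t) with (s * ((a + b) / 2 - t)) by ring.
  rewrite Rabs_mult, Rabs_pos_eq by lra.
  assert (Rabs ((a + b) / 2 - t) <= (b - a) / 2) by (unfold Rabs; destruct Rcase_abs; lra).
  nra.
Qed.

Lemma eq_at_boundary (a b t : R) (g h : R -> R) :
  a < b -> a <= t <= b -> continuous g t ->
  filterlim h (within (fun z => a <= z <= b) (locally t)) (locally (h t)) ->
  (forall z, a < z < b -> g z = h z) -> g t = h t.
Proof.
  intros Hab Ht Hg Hh Hgh.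
  assert (HF := within_open_interval_proper a b t Hab Ht).
  apply (filterlim_locally_unique h).
  - apply (filterlim_within_ext _ g h Hgh), (filterlim_within_of_continuous g _ t Hg).
  - apply (filterlim_filter_le_1 (F := within (fun z => a <= z <= b) (locally t)) h);
      [| exact Hh].
    intros P HP. unfold within in *.
    apply (filter_imp (fun x => a <= x <= b -> P x)); [intros x H Hx; apply H; lra | exact HP].
Qed.

(** * Riemann integrability *)

Lemma continuous_clamp a b y : a <= b -> continuous (clamp a b) y.
Proof.
  intros Hab. apply (continuous_clamp_comp (fun z => z)); [exact Hab |].
  intros z _. apply filterlim_within_of_continuous, continuous_id.
Qed.

Lemma continuous_locally_zero (f : R -> R) x del :
  0 < del -> (forall z, Rabs (z - x) < del -> f z = 0) -> continuous f x.
Proof.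
  intros Hdel Hf. unfold continuous. rewrite (Hf x) by (rewrite Rminus_diag, Rabs_R0; exact Hdel).
  apply (filterlim_ext_loc (fun _ => 0)); [| apply continuous_const].
  exists (mkposreal del Hdel). intros z Hz. symmetry. exact (Hf z Hz).
Qed.

Definition cutoff (x del y : R) : R := clamp 0 1 ((Rabs (y - x) - del) / del).

Lemma cutoff_continuous x del y : 0 < del -> continuous (cutoff x del) y.
Proof.
  intros Hdel. unfold cutoff.
  apply (continuous_comp (fun z => (Rabs (z - x) - del) / del) (clamp 0 1)).
  - apply continuous_Rdiv; [| apply continuous_const | lra].
    apply continuous_Rminus; [| apply continuous_const].
    apply (continuous_comp (fun z => z - x) Rabs); [continuity_R | apply continuous_Rabs].
  - apply continuous_clamp. lra.
Qed.

Lemma cutoff_spec x del y :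
  0 < del ->
  0 <= cutoff x del y <= 1 /\
  (Rabs (y - x) <= del -> cutoff x del y = 0) /\
  (2 * del <= Rabs (y - x) -> cutoff x del y = 1).
Proof.
  intros Hdel. unfold cutoff.
  assert (E : (Rabs (y - x) - del) / del * del = Rabs (y - x) - del) by (field; lra).
  set (r := (Rabs (y - x) - del) / del) in *.
  unfold clamp, Rmax, Rmin. repeat split; intros; repeat destruct Rle_dec; nra.
Qed.

Lemma adapted_couple_bump (E : R -> R) p c d q B :
  p <= c <= d -> d <= q ->
  (forall t, p < t < c -> E t = 0) -> (forall t, c < t < d -> E t = B) ->
  (forall t, d < t < q -> E t = 0) ->
  adapted_couple E p q (p :: c :: d :: q :: nil) (0 :: B :: 0 :: nil).
Proof.
  intros Hc Hd H1 H2 H3. repeat split.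
  - intros i Hi. destruct i as [|[|[|i]]]; simpl in *; lra || lia.
  - simpl. unfold Rmin. destruct Rle_dec; lra.
  - simpl. unfold Rmax. destruct Rle_dec; lra.
  - intros i Hi. destruct i as [|[|[|i]]]; simpl in Hi |- *; try lia;
      intros t Ht; unfold open_interval in Ht; auto.
Qed.

Lemma bump_StepFun p q x r B :
  p <= q -> 0 <= r -> 0 <= B ->
  { psi : StepFun p q |
    (forall t, psi t = if Rlt_dec (Rabs (t - x)) r then B else 0) /\
    0 <= RiemannInt_SF psi <= 2 * r * B }.
Proof.
  intros Hpq Hr HB.
  set (E := fun t => if Rlt_dec (Rabs (t - x)) r then B else 0).
  set (c := clamp p q (x - r)). set (d := clamp p q (x + r)).
  assert (Hcd : c <= d) by (unfold c, d, clamp, Rmax, Rmin; repeat destruct Rle_dec; lra).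
  assert (HE : adapted_couple E p q (p :: c :: d :: q :: nil) (0 :: B :: 0 :: nil)).
  { apply adapted_couple_bump; try (split; [apply clamp_in, Hpq | exact Hcd]);
      try apply clamp_in, Hpq;
      intros t Ht; unfold E; destruct Rlt_dec as [Hlt | Hlt]; trivial; exfalso;
      revert Hlt Ht; unfold c, d, clamp, Rmax, Rmin;
      repeat destruct Rle_dec; unfold Rabs; destruct Rcase_abs; lra. }
  exists (mkStepFun (existT _ _ (existT _ _ HE) : IsStepFun E p q)). split; [reflexivity |].
  assert (d - c <= 2 * r).
  { pose proof (clamp_contraction p q (x - r) (x + r) Hpq).
    fold c d in H. revert H. unfold Rabs; repeat destruct Rcase_abs; lra. }
  unfold RiemannInt_SF. destruct Rle_dec; [simpl | lra]. nra.
Qed.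

Lemma Riemann_integrable_continuous_off_point (F : R -> R) p q x B :
  p <= q -> (forall y, p <= y <= q -> Rabs (F y) <= B) ->
  (forall y, p <= y <= q -> y <> x -> continuous F y) -> Riemann_integrable F p q.
Proof.
  intros Hpq HB HF eps.
  set (B' := Rabs B + 1).
  assert (HB' : 0 < B') by (unfold B'; pose proof (Rabs_pos B); lra).
  set (del := eps / (8 * B')).
  assert (Hdel : 0 < del) by (apply Rdiv_lt_0_compat; [apply cond_pos | lra]).
  (* [F] is split into a continuous part and a part supported near [x] *)
  set (h := fun y => F y * cutoff x del y).
  assert (Hh : forall y, p <= y <= q -> continuity_pt h y).
  { intros y Hy. apply continuity_pt_filterlim. destruct (Req_dec y x) as [->|Hyx].
    - apply (continuous_locally_zero _ _ del Hdel). intros z Hz. unfold h.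
      rewrite (proj1 (proj2 (cutoff_spec x del z Hdel))); lra.
    - apply continuous_Rmult; [now apply HF | now apply cutoff_continuous]. }
  assert (Heps2 : 0 < eps / 2) by (pose proof (cond_pos eps); lra).
  destruct (continuity_implies_RiemannInt Hpq Hh (mkposreal _ Heps2)) as [phi [psi [Hphi Hpsi]]].
  destruct (bump_StepFun p q x (2 * del) B' Hpq ltac:(lra) ltac:(lra)) as [sE [HsE HIsE]].
  exists phi, (mkStepFun (StepFun_P28 1 psi sE)). split.
  - intros t Ht. simpl.
    assert (Ht' : p <= t <= q) by (revert Ht; unfold Rmin, Rmax; destruct Rle_dec; lra).
    specialize (Hphi t Ht). fold (h t) in Hphi |- *.
    destruct (cutoff_spec x del t Hdel) as (Hc01 & _ & Hfar).
    enough (Rabs (F t - h t) <= sE t)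
      by (pose proof (Rabs_triang (F t - h t) (h t - phi t));
          replace (F t - h t + (h t - phi t)) with (F t - phi t) in * by ring; lra).
    unfold h. rewrite HsE.
    replace (F t - F t * cutoff x del t) with (F t * (1 - cutoff x del t)) by ring.
    rewrite Rabs_mult. destruct Rlt_dec.
    + rewrite (Rabs_pos_eq (1 - _)) by lra. pose proof (HB t Ht').
      pose proof (Rle_abs B). pose proof (Rabs_pos (F t)). unfold B'. nra.
    + rewrite Hfar by lra. rewrite Rminus_diag, Rabs_R0. lra.
  - rewrite StepFun_P30. pose proof (Rabs_triang (RiemannInt_SF psi) (1 * RiemannInt_SF sE)).
    rewrite Rmult_1_l, (Rabs_pos_eq (RiemannInt_SF sE)) in * by lra.
    assert (2 * (2 * del) * B' = eps / 2) by (unfold del; field; lra). simpl in Hpsi. lra.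
Qed.

Lemma ex_RInt_of_local (F : R -> R) a b :
  a <= b ->
  (forall x, a <= x <= b -> exists del, 0 < del /\
     forall p q, a <= p <= x -> x <= q <= b -> q - p < del -> ex_RInt F p q) ->
  ex_RInt F a b.
Proof.
  intros Hab Hloc.
  (* the supremum [m] of the [t] with [F] integrable on [[a, t]] is [b] *)
  set (E := fun t => a <= t <= b /\ ex_RInt F a t).
  assert (HaE : E a) by (split; [lra | apply ex_RInt_point]).
  destruct (completeness E) as [m [Hub Hlub]];
    [exists b; intros t [Ht _]; lra | now exists a |].
  assert (Hm : a <= m <= b) by (split; [apply Hub, HaE | apply Hlub; intros t [Ht _]; lra]).
  destruct (Hloc m Hm) as [del [Hdel Hd]].
  destruct (classic (exists t, E t /\ m - del / 2 < t)) as [[t [[Ht Hat] Htm]] | Hno].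
  2:{ exfalso. assert (m <= m - del / 2) by (apply Hlub; intros t Et;
        apply Rnot_lt_le; intros Hlt; apply Hno; now exists t). lra. }
  assert (t <= m) by (apply Hub; now split).
  set (q := Rmin b (m + del / 4)).
  assert (Hq : m <= q <= b) by (unfold q, Rmin; destruct Rle_dec; lra).
  assert (Haq : ex_RInt F a q)
    by (apply (ex_RInt_Chasles F a t q Hat), Hd; unfold q, Rmin in *; try destruct Rle_dec; lra).
  assert (Hqm : q <= m) by (apply Hub; split; [lra | exact Haq]).
  unfold q, Rmin in Haq, Hqm. destruct Rle_dec; [exact Haq | lra].
Qed.

(** * Zeros of [U - U_beta] and integrability of [K_beta |phi|^2] *)

Lemma simple_zero_isolated (f f1 f2 : R -> R) x d :
  0 < d -> (forall z, Rabs (z - x) < d -> is_derive f z (f1 z) /\ is_derive f1 z (f2 z)) ->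
  continuous f2 x -> f x = 0 -> f1 x <> 0 ->
  exists del, 0 < del /\ forall y, y <> x -> Rabs (y - x) < del -> f y <> 0.
Proof.
  intros Hd Hder Hc Hfx H1.
  set (K := Rabs (f2 x) + 1).
  assert (HK : 0 < K) by (unfold K; pose proof (Rabs_pos (f2 x)); lra).
  assert (H10 : 0 < Rabs (f1 x)) by now apply Rabs_pos_lt.
  destruct (continuous_ball f2 x 1 Hc ltac:(lra)) as [d0 [Hd0 Hball]].
  set (del := Rmin (Rmin d d0) (Rabs (f1 x) / (2 * K))).
  assert (Hdel : del <= d /\ del <= d0 /\ del <= Rabs (f1 x) / (2 * K)).
  { unfold del. pose proof (Rmin_l (Rmin d d0) (Rabs (f1 x) / (2 * K))).
    pose proof (Rmin_r (Rmin d d0) (Rabs (f1 x) / (2 * K))).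
    pose proof (Rmin_l d d0). pose proof (Rmin_r d d0). lra. }
  exists del. split; [apply Rmin_pos; [now apply Rmin_pos | apply Rdiv_lt_0_compat; lra] |].
  intros y Hyx Hy Hfy.
  assert (T := taylor_second_order_bound f f1 f2 x y 0 K).
  rewrite Hfx, Hfy in T.
  replace (0 - 0 - f1 x * (y - x) - 0 / 2 * (y - x) ^ 2) with (- (f1 x * (y - x))) in T
    by field.
  rewrite Rabs_Ropp, Rabs_mult in T.
  replace ((y - x) ^ 2) with (Rabs (y - x) * Rabs (y - x)) in T
    by (unfold Rabs; destruct Rcase_abs; ring).
  assert (Hyx0 : 0 < Rabs (y - x)) by (apply Rabs_pos_lt; lra).
  assert (Hsmall : K * Rabs (y - x) < Rabs (f1 x) / 2).
  { replace (Rabs (f1 x) / 2) with (K * (Rabs (f1 x) / (2 * K))) by (field; lra).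
    apply Rmult_lt_compat_l; lra. }
  enough (Rabs (f1 x) * Rabs (y - x) <= K * (Rabs (y - x) * Rabs (y - x))) by nra.
  apply T; intros z Hz; pose proof (Rabs_between x y z Hz).
  - apply Hder. lra.
  - assert (Rabs (f2 z - f2 x) < 1) by (apply Hball; lra).
    pose proof (Rabs_triang (f2 z - f2 x) (f2 x)).
    replace (f2 z - f2 x + f2 x) with (f2 z) in * by ring.
    rewrite Rminus_0_r. unfold K. lra.
Qed.

Lemma double_zero_isolated (f f1 f2 : R -> R) x d :
  0 < d -> (forall z, Rabs (z - x) < d -> is_derive f z (f1 z) /\ is_derive f1 z (f2 z)) ->
  continuous f2 x -> f x = 0 -> f1 x = 0 -> f2 x <> 0 ->
  exists del, 0 < del /\ forall y, y <> x -> Rabs (y - x) < del -> f y <> 0.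
Proof.
  intros Hd Hder Hc Hfx H1 H2.
  set (c := f2 x). assert (Hc0 : 0 < Rabs c) by now apply Rabs_pos_lt.
  destruct (continuous_ball f2 x (Rabs c / 4) Hc ltac:(lra)) as [d0 [Hd0 Hball]].
  exists (Rmin d d0). split; [now apply Rmin_pos |]. intros y Hyx Hy Hfy.
  pose proof (Rmin_l d d0). pose proof (Rmin_r d d0).
  assert (T := taylor_second_order_bound f f1 f2 x y c (Rabs c / 4)).
  rewrite Hfx, H1, Hfy in T.
  replace (0 - 0 - 0 * (y - x) - c / 2 * (y - x) ^ 2) with (- (c * (y - x) ^ 2 / 2)) in T
    by field.
  rewrite Rabs_Ropp, Rabs_div, Rabs_mult, (Rabs_pos_eq ((y - x) ^ 2)), (Rabs_pos_eq 2)
    in T by (try apply pow2_ge_0; lra).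
  assert (Hy2 : 0 < (y - x) ^ 2) by (apply pow2_gt_0; lra).
  enough (Rabs c * (y - x) ^ 2 / 2 <= Rabs c / 4 * (y - x) ^ 2) by nra.
  apply T; intros z Hz; pose proof (Rabs_between x y z Hz).
  - apply Hder. lra.
  - apply Rlt_le, Hball. lra.
Qed.

Lemma zero_of_second_derivative_bound (f f1 f2 : R -> R) p q t M :
  0 <= M -> M * (q - p) ^ 2 < 1 -> p <= t <= q ->
  (forall z, p <= z <= q ->
     is_derive f z (f1 z) /\ is_derive f1 z (f2 z) /\ Rabs (f2 z) <= M * Rabs (f z)) ->
  f t = 0 -> f1 t = 0 -> forall z, p <= z <= q -> f z = 0.
Proof.
  intros HM HMh Ht Hd Hft Hf1t.
  destruct (continuity_ab_maj (fun z => Rabs (f z)) p q) as [zs [Hmax Hzs]]; [lra | |].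
  { intros z Hz. apply continuity_pt_filterlim.
    apply (continuous_comp f Rabs); [| apply continuous_Rabs].
    apply (is_derive_continuous f z (f1 z)), Hd, Hz. }
  assert (Hseg : forall z, Rmin t zs <= z <= Rmax t zs -> p <= z <= q)
    by (intros z; unfold Rmin, Rmax; destruct Rle_dec; lra).
  assert (T := taylor_second_order_bound f f1 f2 t zs 0 (M * Rabs (f zs))).
  rewrite Hft, Hf1t in T.
  replace (f zs - 0 - 0 * (zs - t) - 0 / 2 * (zs - t) ^ 2) with (f zs) in T by field.
  assert (Hlen : (zs - t) ^ 2 <= (q - p) ^ 2).
  { rewrite <- !Rsqr_pow2. apply Rsqr_le_abs_1.
    rewrite (Rabs_pos_eq (q - p)) by lra. unfold Rabs; destruct Rcase_abs; lra. }
  assert (Hzero : Rabs (f zs) = 0).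
  { assert (Rabs (f zs) <= M * Rabs (f zs) * (zs - t) ^ 2).
    { apply T; intros z Hz; destruct (Hd z (Hseg z Hz)) as (D1 & D2 & Hb); [now split |].
      rewrite Rminus_0_r. eapply Rle_trans; [exact Hb |].
      apply Rmult_le_compat_l; [exact HM | apply Hmax, Hseg, Hz]. }
    pose proof (Rabs_pos (f zs)). pose proof (pow2_ge_0 (zs - t)).
    assert (M * Rabs (f zs) * (zs - t) ^ 2 <= M * Rabs (f zs) * (q - p) ^ 2)
      by (apply Rmult_le_compat_l; [apply Rmult_le_pos |]; lra).
    nra. }
  intros z Hz. apply Rabs_eq_0. specialize (Hmax z Hz). simpl in Hmax.
  pose proof (Rabs_pos (f z)). lra.
Qed.

Lemma degenerate_zero_locally_zero (f f1 f2 : R -> R) a b M x :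
  0 <= M ->
  (forall z, a <= z <= b ->
     is_derive f z (f1 z) /\ is_derive f1 z (f2 z) /\ Rabs (f2 z) <= M * Rabs (f z)) ->
  a <= x <= b -> f x = 0 -> f1 x = 0 ->
  exists h, 0 < h /\ forall y, a <= y <= b -> Rabs (y - x) < h -> f y = 0.
Proof.
  intros HM Hd Hx Hfx H1x.
  set (h := / (2 * (M + 1))).
  assert (Hh : 0 < h) by (unfold h; apply Rinv_0_lt_compat; lra).
  exists h. split; [exact Hh |]. intros y Hy Hyx.
  set (p := Rmax a (x - h)). set (q := Rmin b (x + h)).
  assert (Hp : a <= p /\ x - h <= p) by (split; [apply Rmax_l | apply Rmax_r]).
  assert (Hq : q <= b /\ q <= x + h) by (split; [apply Rmin_l | apply Rmin_r]).
  assert (Hpq : p <= x <= q) by (unfold p, q, Rmax, Rmin; repeat destruct Rle_dec; lra).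
  apply (zero_of_second_derivative_bound f f1 f2 p q x M); trivial.
  - assert (E : 2 * h * (M + 1) = 1) by (unfold h; field; lra).
    assert ((q - p) ^ 2 <= (2 * h) ^ 2) by (apply pow_incr; lra).
    nra.
  - intros z Hz. apply Hd. lra.
  - unfold Rabs in Hyx; destruct Rcase_abs in Hyx;
      unfold p, q, Rmax, Rmin; repeat destruct Rle_dec; lra.
Qed.

Lemma zeros_isolated_or_locally_zero (f f1 f2 k : R -> R) a b eps c M x :
  0 < eps ->
  (forall z, a - eps < z < b + eps ->
     is_derive f z (f1 z) /\ is_derive f1 z (f2 z) /\ continuous f2 z) ->
  (forall z, a <= z <= b -> k z * f z = c - f2 z /\ 0 <= k z <= M) ->
  a <= x <= b ->
  exists del, 0 < del /\
    ((forall y, y <> x -> Rabs (y - x) < del -> f y <> 0) \/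
     (forall y, a <= y <= b -> Rabs (y - x) < del -> f y = 0)).
Proof.
  intros Heps Hd Hk Hx.
  assert (Hball : forall z, Rabs (z - x) < eps -> a - eps < z < b + eps)
    by (intros z; unfold Rabs; destruct Rcase_abs; lra).
  assert (Hd' : forall z, Rabs (z - x) < eps -> is_derive f z (f1 z) /\ is_derive f1 z (f2 z))
    by (intros z Hz; split; apply Hd, Hball, Hz).
  assert (Hc : continuous f2 x)
    by (apply Hd, Hball; rewrite Rminus_diag, Rabs_R0; exact Heps).
  destruct (Req_dec (f x) 0) as [Hfx | Hfx].
  2:{ destruct (continuous_ball f x (Rabs (f x))) as [del [Hdel Hf]].
      - apply (is_derive_continuous f x (f1 x)), Hd'.
        rewrite Rminus_diag, Rabs_R0. exact Heps.
      - now apply Rabs_pos_lt.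
      - exists del. split; [exact Hdel |]. left. intros y _ Hy Hfy.
        specialize (Hf y Hy). rewrite Hfy, Rminus_0_l, Rabs_Ropp in Hf. lra. }
  assert (Hf2x : f2 x = c) by (destruct (Hk x Hx) as [E _]; rewrite Hfx in E; lra).
  destruct (Req_dec (f1 x) 0) as [H1x | H1x].
  2:{ destruct (simple_zero_isolated f f1 f2 x eps Heps Hd' Hc Hfx H1x) as [del [Hdel Hiso]].
      exists del. split; [exact Hdel | now left]. }
  destruct (Req_dec c 0) as [Hc0 | Hc0].
  2:{ rewrite <- Hf2x in Hc0.
      destruct (double_zero_isolated f f1 f2 x eps Heps Hd' Hc Hfx H1x Hc0) as [del [Hdel Hiso]].
      exists del. split; [exact Hdel | now left]. }
  (* degenerate zero: [f'' = - k f], so [f] vanishes identically near [x] *)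
  destruct (degenerate_zero_locally_zero f f1 f2 a b M x) as [h [Hh Hzero]]; trivial.
  - destruct (Hk x Hx). lra.
  - intros z Hz. destruct (Hk z Hz) as [E Hkz].
    assert (Hz' : a - eps < z < b + eps) by lra.
    split; [apply Hd, Hz' | split; [apply Hd, Hz' |]].
    replace (f2 z) with (- (k z * f z)) by lra.
    rewrite Rabs_Ropp, Rabs_mult, (Rabs_pos_eq (k z)) by lra.
    apply Rmult_le_compat_r; [apply Rabs_pos | lra].
  - exists h. split; [exact Hh | now right].
Qed.

Lemma Kbeta_spec U a b beta Ub :
  Kbeta_pos_bdd U a b beta Ub ->
  exists M, forall y, a <= y <= b ->
    Kbeta U beta Ub y * (U y - Ub) = beta - Derive_n U 2 y /\ 0 <= Kbeta U beta Ub y <= M.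
Proof.
  intros [K [M HK]]. exists M. intros y Hy. destruct (HK y Hy) as (E & K0 & KM).
  unfold Kbeta. destruct (Req_dec (U y - Ub) 0) as [Z | Z].
  - rewrite Z, Rdiv_0_r in *. lra.
  - replace ((beta - Derive_n U 2 y) / (U y - Ub)) with (K y) by (rewrite <- E; field; exact Z).
    lra.
Qed.

Lemma Rabs_le_Linf_on (f : R -> R) a b M y :
  (forall z, a <= z <= b -> Rabs (f z) <= M) -> a <= y <= b -> Rabs (f y) <= Linf_on f a b.
Proof.
  intros HM Hy. unfold Linf_on.
  set (E := fun v => exists z, a <= z <= b /\ v = Rabs (f z)).
  destruct (Lub_Rbar_correct E) as [Hub Hlub].
  specialize (Hub (Rabs (f y)) (ex_intro _ y (conj Hy eq_refl))).
  destruct (Lub_Rbar E) as [l | |] eqn:El; simpl in Hub |- *; [exact Hub | | contradiction].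
  exfalso. apply (Hlub (Finite M)). intros v [z [Hz ->]]. exact (HM z Hz).
Qed.

Lemma Kbeta_le_Linf_on U a b beta Ub :
  Kbeta_pos_bdd U a b beta Ub ->
  forall y, a <= y <= b -> 0 <= Kbeta U beta Ub y <= Linf_on (Kbeta U beta Ub) a b.
Proof.
  intros HK y Hy. destruct (Kbeta_spec U a b beta Ub HK) as [M HM].
  split; [apply HM, Hy |]. eapply Rle_trans; [apply Rle_abs |].
  apply (Rabs_le_Linf_on _ a b M); [| exact Hy].
  intros z Hz. rewrite Rabs_pos_eq; apply HM, Hz.
Qed.

Lemma continuous_Kbeta U beta Ub y :
  continuous U y -> continuous (Derive_n U 2) y -> U y - Ub <> 0 ->
  continuous (Kbeta U beta Ub) y.
Proof.
  intros HU HU2 Hy.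
  apply (continuous_Rdiv (fun z => beta - Derive_n U 2 z) (fun z => U z - Ub)); trivial;
    continuity_R.
Qed.

Lemma ex_RInt_Kbeta_mul (U g : R -> R) a b eps beta Ub :
  a <= b -> 0 < eps ->
  (forall z, a - eps < z < b + eps ->
     is_derive U z (Derive_n U 1 z) /\ is_derive (Derive_n U 1) z (Derive_n U 2 z) /\
     continuous (Derive_n U 2) z) ->
  Kbeta_pos_bdd U a b beta Ub -> (forall z, a <= z <= b -> continuous g z) ->
  ex_RInt (fun y => Kbeta U beta Ub y * g y) a b.
Proof.
  intros Hab Heps HU HK Hg.
  destruct (Kbeta_spec U a b beta Ub HK) as [M HM].
  set (K := Kbeta U beta Ub) in *.
  destruct (continuity_ab_maj (fun z => Rabs (g z)) a b Hab) as [zg [HG _]].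
  { intros z Hz. apply continuity_pt_filterlim.
    apply (continuous_comp g Rabs); [apply Hg, Hz | apply continuous_Rabs]. }
  assert (Hf : forall z, a - eps < z < b + eps ->
            is_derive (fun z => U z - Ub) z (Derive_n U 1 z) /\
            is_derive (Derive_n U 1) z (Derive_n U 2 z) /\ continuous (Derive_n U 2) z).
  { intros z Hz. destruct (HU z Hz) as (D1 & D2 & C2). split; [| split; trivial].
    auto_derive_using. ring. }
  (* [K] need not be continuous at an end of [a, b] near which [U = Ub]; [K o clamp] is *)
  apply (ex_RInt_ext (fun y => K (clamp a b y) * g y)).
  { intros y Hy. rewrite Rmin_left, Rmax_right in Hy by lra. now rewrite clamp_id by lra. }
  apply ex_RInt_of_local; [exact Hab |]. intros x Hx.
  destruct (zeros_isolated_or_locally_zero _ _ _ K a b eps beta M x Heps Hf HM Hx)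
    as [del [Hdel Hcase]].
  exists del. split; [exact Hdel |]. intros p q Hp Hq Hpq.
  apply ex_RInt_Reals_1, (Riemann_integrable_continuous_off_point _ p q x (M * Rabs (g zg)));
    [lra | |].
  { intros y Hy. assert (Hcy := clamp_in a b y Hab).
    rewrite Rabs_mult, (Rabs_pos_eq (K _)) by apply HM, Hcy.
    apply Rmult_le_compat; [apply HM, Hcy | apply Rabs_pos | apply HM, Hcy | apply HG; lra]. }
  intros y Hy Hyx. assert (Hya : a <= y <= b) by lra.
  assert (Hyd : Rabs (y - x) < del) by (unfold Rabs; destruct Rcase_abs; lra).
  destruct Hcase as [Hiso | Hzero].
  - apply continuous_Rmult; [| apply Hg, Hya].
    apply (continuous_comp (clamp a b) K); [apply continuous_clamp, Hab |].
    rewrite clamp_id by exact Hya. destruct (HU y ltac:(lra)) as (D1 & _ & C2).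
    exact (continuous_Kbeta U beta Ub y (is_derive_continuous _ _ _ D1) C2 (Hiso y Hyx Hyd)).
  - apply (continuous_locally_zero _ _ (del - Rabs (y - x))); [lra |]. intros z Hz.
    assert (Hcz : Rabs (clamp a b z - x) < del).
    { rewrite <- (clamp_id a b x Hx).
      eapply Rle_lt_trans; [apply clamp_contraction, Hab |].
      pose proof (Rabs_triang (z - y) (y - x)).
      replace (z - y + (y - x)) with (z - x) in * by ring. lra. }
    unfold K, Kbeta. rewrite (Hzero _ (clamp_in a b z Hab) Hcz), Rdiv_0_r. ring.
Qed.

(** * A C^2 representative of the solution *)

Lemma C3_on_derivatives U a b :
  C3_on U a b ->
  exists eps, 0 < eps /\ forall z, a - eps < z < b + eps ->
    is_derive U z (Derive_n U 1 z) /\ is_derive (Derive_n U 1) z (Derive_n U 2 z) /\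
    continuous (Derive_n U 2) z.
Proof.
  intros [eps [Heps HC]]. exists eps. split; [exact Heps |]. intros z Hz.
  destruct (HC z Hz) as [Hk _].
  split; [| split]; [exact (Derive_correct _ z (Hk 1%nat ltac:(lia)))
                    | exact (Derive_correct _ z (Hk 2%nat ltac:(lia))) |].
  exact (is_derive_continuous _ _ _ (Derive_correct _ z (Hk 3%nat ltac:(lia)))).
Qed.

Lemma is_derive_components (g : R -> C) x (l : C) :
  is_derive g x l ->
  is_derive (fun t => fst (g t)) x (fst l) /\ is_derive (fun t => snd (g t)) x (snd l).
Proof.
  intros H. split.
  - apply (filterdiff_comp' g fst x (fun y => scal y l) fst H), filterdiff_linear, is_linear_fst.
  - apply (filterdiff_comp' g snd x (fun y => scal y l) snd H), filterdiff_linear, is_linear_snd.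
Qed.

Lemma filterlim_components (F : (R -> Prop) -> Prop) (g : R -> C) (z : C) :
  filterlim g F (locally z) ->
  filterlim (fun t => fst (g t)) F (locally (fst z)) /\
  filterlim (fun t => snd (g t)) F (locally (snd z)).
Proof.
  intros H. destruct z as [z1 z2]. split; (eapply filterlim_comp; [exact H |]).
  - apply continuous_fst.
  - apply continuous_snd.
Qed.

Definition weight (U U2 : R -> R) (beta : R) (c : C) (y : R) : R :=
  (beta - U2 y) / ((U y - Re c) ^ 2 + Im c ^ 2).

Lemma weight_Kbeta U a b beta Ub c :
  Kbeta_pos_bdd U a b beta Ub -> 0 < Im c ->
  forall y, a <= y <= b ->
    weight U (Derive_n U 2) beta c y * ((U y - Re c) ^ 2 + Im c ^ 2)
      = Kbeta U beta Ub y * (U y - Ub) /\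
    0 <= Kbeta U beta Ub y <= Linf_on (Kbeta U beta Ub) a b.
Proof.
  intros HK Hc y Hy. split; [| exact (Kbeta_le_Linf_on U a b beta Ub HK y Hy)].
  destruct (Kbeta_spec U a b beta Ub HK) as [M HM].
  unfold weight. rewrite (proj1 (HM y Hy)). field.
  apply Rgt_not_eq, Rplus_le_lt_0_compat; [apply pow2_ge_0 | apply pow_lt, Hc].
Qed.

Lemma Rayleigh_components (al bb Uy : R) (c z d2z : C) :
  0 < Im c ->
  (- d2z + RtoC al * z - (RtoC bb / (RtoC Uy - c)) * z)%C = 0%C ->
  let w := bb / ((Uy - Re c) ^ 2 + Im c ^ 2) in
  fst d2z = al * fst z - w * ((Uy - Re c) * fst z - Im c * snd z) /\
  snd d2z = al * snd z - w * ((Uy - Re c) * snd z + Im c * fst z).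
Proof.
  intros Hci H w. destruct c as [cr ci], z as [u v], d2z as [u2 v2]. simpl in *.
  assert (HD : (Uy - cr) ^ 2 + ci ^ 2 <> 0)
    by (apply Rgt_not_eq, Rplus_le_lt_0_compat; [apply pow2_ge_0 | apply pow_lt, Hci]).
  unfold Cminus, Cplus, Cmult, Copp, Cdiv, Cinv, RtoC in H. simpl in H.
  injection H as H1 H2. unfold w.
  split; apply Rminus_diag_uniq;
    match goal with H : ?E = 0 |- _ - ?F = 0 =>
      (* each equation is the negative of one component of the complex equation *)
      replace (_ - F) with (- E) by (field; repeat split; intros Hz; apply HD; rewrite <- Hz; ring);
      rewrite H; ring
    end.
Qed.

Section Solution.

Variables (a b alpha beta : R) (c : C) (U U2 : R -> R) (phi dphi d2phi : R -> C).

Hypothesis Hab : a < b.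
Hypothesis Hc : 0 < Im c.
Hypothesis HU : forall y, a <= y <= b -> continuous U y /\ continuous U2 y.
Hypothesis Hcont : forall y, a <= y <= b ->
  filterlim phi (within (fun z => a <= z <= b) (locally y)) (locally (phi y)).
Hypothesis Hd1 : forall y, a < y < b -> is_derive phi y (dphi y).
Hypothesis Hd2 : forall y, a < y < b -> is_derive dphi y (d2phi y).
Hypothesis Heq : forall y, a < y < b ->
  (- d2phi y + RtoC (alpha ^ 2) * phi y - (RtoC (beta - U2 y) / (RtoC (U y) - c)) * phi y)%C
  = 0%C.
Hypothesis Hbc1 : phi a = 0%C.
Hypothesis Hbc2 : phi b = 0%C.

Let w := weight U U2 beta c.
Let u t := fst (phi t).
Let v t := snd (phi t).

Lemma filterlim_within_uv y : a <= y <= b ->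
  filterlim u (within (fun z => a <= z <= b) (locally y)) (locally (u y)) /\
  filterlim v (within (fun z => a <= z <= b) (locally y)) (locally (v y)).
Proof. intros Hy. exact (filterlim_components _ phi _ (Hcont y Hy)). Qed.

(* The right-hand side of the equation, frozen outside [a, b]. *)
Let F1 t := let s := clamp a b t in
  alpha ^ 2 * u s - w s * ((U s - Re c) * u s - Im c * v s).
Let F2 t := let s := clamp a b t in
  alpha ^ 2 * v s - w s * ((U s - Re c) * v s + Im c * u s).

Lemma continuous_rhs x : continuous F1 x /\ continuous F2 x.
Proof.
  assert (Hcl : forall g : R -> R, (forall y, a <= y <= b -> continuous g y) ->
                  continuous (fun t => g (clamp a b t)) x)
    by (intros g Hg; apply continuous_clamp_comp; [lra |];
        intros y Hy; apply filterlim_within_of_continuous, Hg, Hy).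
  assert (Cu : continuous (fun t => u (clamp a b t)) x)
    by (apply continuous_clamp_comp; [lra | apply filterlim_within_uv]).
  assert (Cv : continuous (fun t => v (clamp a b t)) x)
    by (apply continuous_clamp_comp; [lra | apply filterlim_within_uv]).
  assert (CU : continuous (fun t => U (clamp a b t)) x) by (apply Hcl, HU).
  assert (CU2 : continuous (fun t => U2 (clamp a b t)) x) by (apply Hcl, HU).
  assert (Cw : continuous (fun t => w (clamp a b t)) x).
  { apply (continuous_Rdiv (fun t => beta - U2 (clamp a b t))
                           (fun t => (U (clamp a b t) - Re c) ^ 2 + Im c ^ 2));
      [continuity_R | continuity_R |].
    apply Rgt_not_eq, Rplus_le_lt_0_compat; [apply pow2_ge_0 | apply pow_lt, Hc]. }
  unfold F1, F2. split; continuity_R.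
Qed.

Lemma solution_representative :
  exists q1 q2 p1 p2 f1 f2 : R -> R,
    (forall x, is_derive q1 x (p1 x) /\ is_derive q2 x (p2 x)) /\
    (forall x, is_derive p1 x (f1 x) /\ is_derive p2 x (f2 x)) /\
    (forall x, continuous f1 x /\ continuous f2 x) /\
    (q1 a = 0 /\ q2 a = 0 /\ q1 b = 0 /\ q2 b = 0) /\
    (forall y, a < y < b ->
       phi y = (q1 y, q2 y) /\ dphi y = (p1 y, p2 y) /\ d2phi y = (f1 y, f2 y)) /\
    (forall y, a < y < b ->
       f1 y = alpha ^ 2 * q1 y - w y * ((U y - Re c) * q1 y - Im c * q2 y) /\
       f2 y = alpha ^ 2 * q2 y - w y * ((U y - Re c) * q2 y + Im c * q1 y)).
Proof.
  assert (Hode : forall y, a < y < b -> fst (d2phi y) = F1 y /\ snd (d2phi y) = F2 y).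
  { intros y Hy. unfold F1, F2. rewrite clamp_id by lra.
    exact (Rayleigh_components _ _ _ c (phi y) (d2phi y) Hc (Heq y Hy)). }
  assert (Hd : forall y, a < y < b ->
            (is_derive u y (fst (dphi y)) /\ is_derive v y (snd (dphi y))) /\
            is_derive (fun t => fst (dphi t)) y (fst (d2phi y)) /\
            is_derive (fun t => snd (dphi t)) y (snd (d2phi y)))
    by (intros y Hy; split; apply is_derive_components; [apply Hd1 | apply Hd2]; exact Hy).
  destruct (C2_extension a b u (fun t => fst (dphi t)) (fun t => fst (d2phi t)) F1 Hab
              (fun x => proj1 (continuous_rhs x))) as (q1 & p1 & Hqp1 & E1).
  { intros x Hx. split; [| split]; apply Hd || apply Hode; exact Hx. }
  destruct (C2_extension a b v (fun t => snd (dphi t)) (fun t => snd (d2phi t)) F2 Hab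
              (fun x => proj2 (continuous_rhs x))) as (q2 & p2 & Hqp2 & E2).
  { intros x Hx. split; [| split]; apply Hd || apply Hode; exact Hx. }
  assert (Hbd : forall t, a <= t <= b -> q1 t = u t /\ q2 t = v t).
  { intros t Ht. destruct (filterlim_within_uv t Ht) as [Hu Hv]. split.
    - apply (eq_at_boundary a b t q1 u Hab Ht (is_derive_continuous _ _ _ (proj1 (Hqp1 t))) Hu).
      intros z Hz. apply E1, Hz.
    - apply (eq_at_boundary a b t q2 v Hab Ht (is_derive_continuous _ _ _ (proj1 (Hqp2 t))) Hv).
      intros z Hz. apply E2, Hz. }
  exists q1, q2, p1, p2, F1, F2.
  split; [intros x; split; apply Hqp1 || apply Hqp2 |].
  split; [intros x; split; apply Hqp1 || apply Hqp2 |].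
  split; [exact continuous_rhs |].
  split.
  { destruct (Hbd a ltac:(lra)) as [-> ->]. destruct (Hbd b ltac:(lra)) as [-> ->].
    unfold u, v. rewrite Hbc1, Hbc2. repeat split. }
  split; intros y Hy; destruct (Hbd y ltac:(lra)) as [Eu Ev].
  - destruct (E1 y Hy) as [_ Ed1]. destruct (E2 y Hy) as [_ Ed2].
    destruct (Hode y Hy) as [Ef1 Ef2].
    rewrite Eu, Ev, Ed1, Ed2, <- Ef1, <- Ef2. unfold u, v. now rewrite <- !surjective_pairing.
  - unfold F1, F2. rewrite clamp_id by lra. now rewrite Eu, Ev.
Qed.

End Solution.

(** * Energy estimates *)

Lemma Cmod_sq (z : C) : Cmod z ^ 2 = fst z ^ 2 + snd z ^ 2.
Proof.
  unfold Cmod. rewrite pow2_sqrt; [reflexivity |].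
  pose proof (pow2_ge_0 (fst z)). pose proof (pow2_ge_0 (snd z)). lra.
Qed.

Lemma RInt_ext_open (f g : R -> R) a b :
  a <= b -> (forall x, a < x < b -> f x = g x) -> RInt f a b = RInt g a b.
Proof.
  intros Hab H. apply RInt_ext. rewrite Rmin_left, Rmax_right by exact Hab. exact H.
Qed.

Section EnergyEstimates.

Variables (a b alpha cr ci Ub L : R) (V w K : R -> R) (phi dphi d2phi : R -> C)
  (q1 q2 p1 p2 f1 f2 : R -> R).

Hypothesis Hab : a < b.
Hypothesis Hci : 0 < ci.
Hypothesis Hq : forall x, is_derive q1 x (p1 x) /\ is_derive q2 x (p2 x).
Hypothesis Hp : forall x, is_derive p1 x (f1 x) /\ is_derive p2 x (f2 x).
Hypothesis Hf : forall x, continuous f1 x /\ continuous f2 x.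
Hypothesis Hq0 : q1 a = 0 /\ q2 a = 0 /\ q1 b = 0 /\ q2 b = 0.
Hypothesis Hrep : forall y, a < y < b ->
  phi y = (q1 y, q2 y) /\ dphi y = (p1 y, p2 y) /\ d2phi y = (f1 y, f2 y).
Hypothesis Hode : forall y, a < y < b ->
  f1 y = alpha ^ 2 * q1 y - w y * ((V y - cr) * q1 y - ci * q2 y) /\
  f2 y = alpha ^ 2 * q2 y - w y * ((V y - cr) * q2 y + ci * q1 y).
Hypothesis HK : forall y, a < y < b ->
  w y * ((V y - cr) ^ 2 + ci ^ 2) = K y * (V y - Ub) /\ 0 <= K y <= L.
Hypothesis HKint : ex_RInt (fun y => K y * Cmod (phi y) ^ 2) a b.

(* [V], [w], [K] play the roles of [U], [(beta - U'')/|U - c|^2], [K_beta], and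
   [q], [p], [f] those of [phi], [phi'], [phi''] split into real and imaginary parts. *)
Let S y := q1 y ^ 2 + q2 y ^ 2.

(* With [q = q1 + i q2] etc., [J 1 0] and [J 0 1] are the real and imaginary parts
   of [(conj q * p)' = |p|^2 + conj q * f]; both integrate to zero. *)
Let J (lam mu : R) y :=
  lam * (p1 y ^ 2 + p2 y ^ 2 + q1 y * f1 y + q2 y * f2 y) + mu * (q1 y * f2 y - q2 y * f1 y).

(* Written through [q] and [f] rather than [w] and [V] so that it is continuous
   (see [X_formula]). *)
Let X y := alpha ^ 2 * S y - (q1 y * f1 y + q2 y * f2 y)
           - (Ub - cr) / ci * (q1 y * f2 y - q2 y * f1 y).

Lemma S_nonneg y : 0 <= S y.
Proof. apply Rplus_le_le_0_compat; apply pow2_ge_0. Qed.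

Lemma continuous_solution x :
  continuous q1 x /\ continuous q2 x /\ continuous p1 x /\ continuous p2 x.
Proof.
  destruct (Hq x) as [D1 D2]. destruct (Hp x) as [D3 D4].
  repeat split; eapply is_derive_continuous; eassumption.
Qed.

Lemma is_RInt_J lam mu : is_RInt (J lam mu) a b 0.
Proof.
  set (G := fun y => lam * (q1 y * p1 y + q2 y * p2 y) + mu * (q1 y * p2 y - q2 y * p1 y)).
  destruct Hq0 as (Ha1 & Ha2 & Hb1 & Hb2).
  replace 0 with (minus (G b) (G a))
    by (unfold G; rewrite Ha1, Ha2, Hb1, Hb2; unfold minus, plus, opp; simpl; ring).
  apply (is_RInt_derive G).
  - intros x _. destruct (Hq x) as [D1 D2]. destruct (Hp x) as [D3 D4].
    unfold G, J. auto_derive_using. ring.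
  - intros x _. destruct (continuous_solution x) as (C1 & C2 & C3 & C4).
    destruct (Hf x) as [C5 C6]. unfold J. continuity_R.
Qed.

Lemma ex_RInt_X : ex_RInt X a b.
Proof.
  apply (ex_RInt_continuous X). intros x _.
  destruct (continuous_solution x) as (C1 & C2 & _). destruct (Hf x) as [C5 C6].
  unfold X, S. continuity_R.
Qed.

Lemma X_formula y : a < y < b -> X y = w y * (V y - 2 * cr + Ub) * S y.
Proof.
  intros Hy. destruct (Hode y Hy) as [E1 E2]. unfold X, S. rewrite E1, E2. field. lra.
Qed.

Lemma X_le y : a < y < b -> X y <= K y * S y.
Proof.
  intros Hy. rewrite X_formula by exact Hy. destruct (HK y Hy) as [E Hk].
  set (D := (V y - cr) ^ 2 + ci ^ 2) in *.
  assert (HD : 0 < D)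
    by (apply Rplus_le_lt_0_compat; [apply pow2_ge_0 | apply pow_lt, Hci]).
  assert (HS := S_nonneg y).
  assert (Edef : (K y * S y - w y * (V y - 2 * cr + Ub) * S y) * D
                 = K y * S y * ((cr - Ub) ^ 2 + ci ^ 2)).
  { replace ((K y * S y - w y * (V y - 2 * cr + Ub) * S y) * D)
      with (K y * S y * D - (w y * D) * (V y - 2 * cr + Ub) * S y) by ring.
    rewrite E. unfold D. ring. }
  assert (0 <= K y * S y * ((cr - Ub) ^ 2 + ci ^ 2))
    by (apply Rmult_le_pos; [apply Rmult_le_pos; lra |
                             apply Rplus_le_le_0_compat; apply pow2_ge_0]).
  enough (0 <= K y * S y - w y * (V y - 2 * cr + Ub) * S y) by lra.
  apply (Rmult_le_reg_r D); [exact HD |]. now rewrite Edef, Rmult_0_l.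
Qed.

Lemma energy_bound :
  RInt (fun y => Cmod (dphi y) ^ 2 + alpha ^ 2 * Cmod (phi y) ^ 2) a b
    <= RInt (fun y => K y * Cmod (phi y) ^ 2) a b.
Proof.
  assert (HJ := is_RInt_J 1 ((Ub - cr) / ci)).
  rewrite (RInt_ext_open _ (fun y => X y + J 1 ((Ub - cr) / ci) y)); [| lra |].
  2:{ intros y Hy. destruct (Hrep y Hy) as (E1 & E2 & _).
      rewrite !Cmod_sq, E1, E2. unfold X, J, S. simpl. field. lra. }
  rewrite (RInt_plus X), (is_RInt_unique _ _ _ _ HJ); [| apply ex_RInt_X | eexists; exact HJ].
  change (RInt X a b + 0 <= RInt (fun y => K y * Cmod (phi y) ^ 2) a b).
  rewrite Rplus_0_r.
  apply RInt_le; [lra | apply ex_RInt_X | exact HKint |].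
  intros y Hy. rewrite Cmod_sq, (proj1 (Hrep y Hy)). apply X_le, Hy.
Qed.

Lemma enstrophy_pointwise y : a < y < b ->
  f1 y ^ 2 + f2 y ^ 2 + 2 * alpha ^ 2 * (p1 y ^ 2 + p2 y ^ 2) + alpha ^ 4 * S y
    <= L * X y + J (2 * alpha ^ 2) (2 * L * (Ub - cr) / ci) y.
Proof.
  intros Hy. destruct (HK y Hy) as [E Hk]. destruct (Hode y Hy) as [E1 E2].
  set (D := (V y - cr) ^ 2 + ci ^ 2) in E.
  assert (HD : 0 < D)
    by (apply Rplus_le_lt_0_compat; [apply pow2_ge_0 | apply pow_lt, Hci]).
  assert (HS := S_nonneg y).
  assert (Edef : L * X y + J (2 * alpha ^ 2) (2 * L * (Ub - cr) / ci) y
                 - (f1 y ^ 2 + f2 y ^ 2 + 2 * alpha ^ 2 * (p1 y ^ 2 + p2 y ^ 2) + alpha ^ 4 * S y)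
                 = w y * S y * (L * (V y - Ub) - w y * D)).
  { unfold X, J, S, D. rewrite E1, E2. field. lra. }
  assert (Hw : 0 <= w y * (V y - Ub)).
  { assert (w y * (V y - Ub) * D = K y * (V y - Ub) ^ 2)
      by (replace (w y * (V y - Ub) * D) with (w y * D * (V y - Ub)) by ring; rewrite E; ring).
    assert (0 <= K y * (V y - Ub) ^ 2) by (apply Rmult_le_pos; [lra | apply pow2_ge_0]).
    apply (Rmult_le_reg_r D); [exact HD |]. now rewrite H, Rmult_0_l. }
  rewrite E in Edef.
  replace (w y * S y * (L * (V y - Ub) - K y * (V y - Ub)))
    with (w y * (V y - Ub) * S y * (L - K y)) in Edef by ring.
  assert (0 <= w y * (V y - Ub) * S y * (L - K y))
    by (apply Rmult_le_pos; [apply Rmult_le_pos |]; lra).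
  lra.
Qed.

Lemma enstrophy_bound :
  RInt (fun y => Cmod (d2phi y) ^ 2 + 2 * alpha ^ 2 * Cmod (dphi y) ^ 2
                 + alpha ^ 4 * Cmod (phi y) ^ 2) a b
    <= L * RInt (fun y => K y * Cmod (phi y) ^ 2) a b.
Proof.
  set (mu := 2 * L * (Ub - cr) / ci).
  assert (HJ := is_RInt_J (2 * alpha ^ 2) mu).
  assert (HL : 0 <= L) by (destruct (HK ((a + b) / 2) ltac:(lra)) as [_ Hk]; lra).
  rewrite (RInt_ext_open _ (fun y => f1 y ^ 2 + f2 y ^ 2 + 2 * alpha ^ 2 * (p1 y ^ 2 + p2 y ^ 2)
                                    + alpha ^ 4 * S y)); [| lra |].
  2:{ intros y Hy. destruct (Hrep y Hy) as (E1 & E2 & E3).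
      rewrite !Cmod_sq, E1, E2, E3. reflexivity. }
  apply Rle_trans with (RInt (fun y => L * X y + J (2 * alpha ^ 2) mu y) a b).
  - apply RInt_le; [lra | | | exact enstrophy_pointwise].
    + apply (ex_RInt_continuous (V := R_CompleteNormedModule)). intros x _.
      destruct (continuous_solution x) as (C1 & C2 & C3 & C4). destruct (Hf x) as [C5 C6].
      unfold S. continuity_R.
    + apply (ex_RInt_plus (V := R_CompleteNormedModule));
        [apply (ex_RInt_scal (V := R_CompleteNormedModule)), ex_RInt_X | eexists; exact HJ].
  - rewrite (RInt_plus (fun y => L * X y)), (is_RInt_unique _ _ _ _ HJ), (RInt_scal X);
      [| apply ex_RInt_X | apply (ex_RInt_scal X), ex_RInt_X | eexists; exact HJ].
    change (L * RInt X a b + 0 <= L * RInt (fun y => K y * Cmod (phi y) ^ 2) a b).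
    rewrite Rplus_0_r. apply Rmult_le_compat_l; [exact HL |].
    apply RInt_le; [lra | apply ex_RInt_X | exact HKint |].
    intros y Hy. rewrite Cmod_sq, (proj1 (Hrep y Hy)). apply X_le, Hy.
Qed.

End EnergyEstimates.

Theorem lemma2p4
  (U : R -> R) (y1 y2 : R) (Hy : y1 < y2) (HU : classKplus U y1 y2)
  (beta : R)
  (Hbeta : exists ya yb : R, y1 <= ya <= y2 /\ y1 <= yb <= y2 /\
             Derive_n U 2 ya < beta < Derive_n U 2 yb)
  (Ub : R) (HUb : Ran U y1 y2 Ub) (HK : Kbeta_pos_bdd U y1 y2 beta Ub)
  (alpha : R) (Halpha : 0 < alpha)
  (c : C) (Hc : 0 < Im c)
  (phi dphi d2phi : R -> C)
  (Hcont : forall y : R, y1 <= y <= y2 ->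
     filterlim phi (within (fun z => y1 <= z <= y2) (locally y)) (locally (phi y)))
  (Hd1 : forall y : R, y1 < y < y2 -> is_derive phi y (dphi y))
  (Hd2 : forall y : R, y1 < y < y2 -> is_derive dphi y (d2phi y))
  (Heq : forall y : R, y1 < y < y2 ->
     (- d2phi y + RtoC (alpha ^ 2) * phi y
      - (RtoC (beta - Derive_n U 2 y) / (RtoC (U y) - c)) * phi y)%C = 0%C)
  (Hbc1 : phi y1 = 0%C) (Hbc2 : phi y2 = 0%C) :
  RInt (fun y => Cmod (dphi y) ^ 2 + alpha ^ 2 * Cmod (phi y) ^ 2) y1 y2
    <= RInt (fun y => Kbeta U beta Ub y * Cmod (phi y) ^ 2) y1 y2
  /\
  RInt (fun y => Cmod (d2phi y) ^ 2 + 2 * alpha ^ 2 * Cmod (dphi y) ^ 2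
                 + alpha ^ 4 * Cmod (phi y) ^ 2) y1 y2
    <= Linf_on (Kbeta U beta Ub) y1 y2
       * RInt (fun y => Kbeta U beta Ub y * Cmod (phi y) ^ 2) y1 y2.
Proof.
  destruct (C3_on_derivatives U y1 y2 (proj1 HU)) as [eps [Heps HdU]].
  assert (HU2 : forall y, y1 <= y <= y2 -> continuous U y /\ continuous (Derive_n U 2) y)
    by (intros y Hy'; destruct (HdU y ltac:(lra)) as (D1 & _ & C2);
        exact (conj (is_derive_continuous _ _ _ D1) C2)).
  destruct (solution_representative y1 y2 alpha beta c U (Derive_n U 2) phi dphi d2phi
              Hy Hc HU2 Hcont Hd1 Hd2 Heq Hbc1 Hbc2)
    as (q1 & q2 & p1 & p2 & f1 & f2 & Hq & Hp & Hf & Hq0 & Hrep & Hode).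
  set (K := Kbeta U beta Ub). set (L := Linf_on K y1 y2).
  assert (HKL := fun y (Hy' : y1 < y < y2) =>
                   weight_Kbeta U y1 y2 beta Ub c HK Hc y ltac:(lra)).
  assert (HKint : ex_RInt (fun y => K y * Cmod (phi y) ^ 2) y1 y2).
  { apply (ex_RInt_ext (fun y => K y * (q1 y ^ 2 + q2 y ^ 2))).
    - intros y Hy'. rewrite Rmin_left, Rmax_right in Hy' by lra.
      now rewrite Cmod_sq, (proj1 (Hrep y Hy')).
    - apply (ex_RInt_Kbeta_mul U _ y1 y2 eps); trivial; [lra |]. intros z _.
      destruct (continuous_solution q1 q2 p1 p2 f1 f2 Hq Hp z) as (C1 & C2 & _).
      continuity_R. }
  split.
  - exact (energy_bound y1 y2 alpha (Re c) (Im c) Ub L U _ K phi dphi d2phi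
             q1 q2 p1 p2 f1 f2 Hy Hc Hq Hp Hf Hq0 Hrep Hode HKL HKint).
  - exact (enstrophy_bound y1 y2 alpha (Re c) (Im c) Ub L U _ K phi dphi d2phi
             q1 q2 p1 p2 f1 f2 Hy Hc Hq Hp Hf Hq0 Hrep Hode HKL HKint).
Qed.
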